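(* Let $G=(V,E)$ be a directed graph, $s\neq t$ vertices, $k\ge 2$ an integer and $e(u,v)\in E$. Suppose $EV^*_1(s,u)$ and $EV^*_{k-2}(v,t)$ both exist. Then $EV^*_1(s,u)\cap EV^*_{k-2}(v,t)=\emptyset$ if and only if $e(u,v)$ is an edge of $SPG_k(s,t)$.
   Context: A path from $x$ to $y$ in $G$ is a vertex sequence $x=v_0,\dots,v_m=y$ with $(v_{i-1},v_i)\in E$; its length is $m$ and $V(p)$, $E(p)$ are its vertex and edge sets. A simple path has no repeated vertex. $SPG_k(s,t)$ is the subgraph of $G$ formed by the union of vertex sets and edge sets of all simple paths from $s$ to $t$ of length at most $k$. For a vertex $u$ and integer $l\ge 0$, $EV^*_l(s,u)$ exists iff there is at least one simple path from $s$ to $u$ of length at most $l$ not containing $t$, and then $EV^*_l(s,u)$ is the intersection of $V(p)$ over all such paths. Symmetrically, $EV^*_l(v,t)$ exists iff there is at least one simple path from $v$ to $t$ of length at most $l$ not containing $s$, and then it is the intersection of $V(p)$ over all such paths. *)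

(* A directed graph G = (V,E) is a finite type V with an
   edge relation e : rel V (e x y means (x,y) \in E). *)
From mathcomp Require Import all_boot.
Set Implicit Arguments. Unset Strict Implicit. Unset Printing Implicit Defensive.

Section Paths.
Variables (V : finType) (e : rel V).

(* A path from x to y is the vertex sequence x :: p with path e x p and
   last x p = y; its length is size p.  Vertex set: x :: p.
   Edge set: the consecutive pairs zip (x :: p) p. *)
Definition simple_path_le (x y : V) (l : nat) (p : seq V) : Prop :=
  [/\ path e x p, last x p = y, uniq (x :: p) & size p <= l].

Definition SPG_edge (k : nat) (s t u v : V) : Prop :=
  exists p, simple_path_le s t k p /\ (u, v) \in zip (s :: p) p.

Definition EVs_exists (s t : V) (l : nat) (u : V) : Prop :=
  exists p, simple_path_le s u l p /\ t \notin s :: p.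
Definition in_EVs (s t : V) (l : nat) (u : V) (w : V) : Prop :=
  forall p, simple_path_le s u l p -> t \notin s :: p -> w \in s :: p.

Definition EVt_exists (s t : V) (l : nat) (v : V) : Prop :=
  exists p, simple_path_le v t l p /\ s \notin v :: p.
Definition in_EVt (s t : V) (l : nat) (v : V) (w : V) : Prop :=
  forall p, simple_path_le v t l p -> s \notin v :: p -> w \in v :: p.

End Paths.

From mathcomp Require Import all_boot zify.
From Stdlib Require Import Classical.
Set Implicit Arguments. Unset Strict Implicit. Unset Printing Implicit Defensive.

(** A simple path of length at most 1 out of s is either trivial or the single
    edge s -> u, so EV*_1(s,u) is {s} or {s,u}.  If EV*_1(s,u) and
    EV*_{k-2}(v,t) are disjoint, then u is not forced on the v-t paths, so some
    v-t path of length at most k-2 avoids both s and u, and prepending s (and u)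
    yields a simple s-t path of length at most k through (u,v).  Conversely, if
    (u,v) lies on a simple s-t path of length at most k, then the only possible
    common vertex is u (no v-t path avoiding s contains s), and then u <> s,
    so the tail of that path after (u,v) is a v-t path of length at most k-2
    avoiding s and u. *)

Lemma mem_zip_behead (T : eqType) (a b : T) (s : seq T) :
  (a, b) \in zip s (behead s) -> exists s1 s2, s = s1 ++ a :: b :: s2.
Proof.
elim: s => [|x [|y s] IH] //=; rewrite in_cons => /orP[/eqP[-> ->]|ab_in].
  by exists [::], s.
have [s1 [s2 ->]] := IH ab_in.
by exists (x :: s1), s2.
Qed.

Section SimplePaths.
Variables (V : finType) (e : rel V).

Lemma simple_path_le_widen x y l l' p :
  l <= l' -> simple_path_le e x y l p -> simple_path_le e x y l' p.
Proof. by move=> ll' [? ? ? size_p]; split=> //; apply: leq_trans ll'. Qed.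

Lemma simple_path_le_cons x y z l p :
  e x y -> x \notin y :: p -> simple_path_le e y z l p ->
  simple_path_le e x z l.+1 (y :: p).
Proof.
by move=> exy xNp [path_p last_p uniq_p size_p]; split; rewrite /= ?exy ?xNp.
Qed.

Lemma simple_path_le1 x y p :
  simple_path_le e x y 1 p ->
  (p = [::] /\ y = x) \/ [/\ p = [:: y], e x y & x != y].
Proof.
case: p => [|z [|? ?]] [] //= => [_ <- _ _|]; first by left.
by rewrite andbT inE => exz <- /andP[xNz _] _; right.
Qed.

Lemma simple_path_le_after_edge x y l p a b :
  simple_path_le e x y l p -> (a, b) \in zip (x :: p) p -> a != x ->
  exists q, [/\ simple_path_le e b y (l - 2) q, x \notin b :: q & a \notin b :: q].
Proof.
move=> [path_p last_p uniq_p size_p] /mem_zip_behead[[|z p1] [q /= p_eq]] aNx.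
  by case: p_eq => ax; rewrite ax eqxx in aNx.
case: p_eq => _ p_eq; subst p.
have : uniq ((x :: p1 ++ [:: a]) ++ b :: q) by rewrite /= -catA.
rewrite cat_uniq has_sym => /and3P[_ /hasPn prefixNbq uniq_bq].
exists q; split.
- split=> //.
  + by move: path_p; rewrite cat_path => /and3P[_ _ /andP[]].
  + by rewrite -last_p last_cat.
  + by move: size_p; rewrite size_cat /=; lia.
- exact: prefixNbq (mem_head _ _).
- by apply: prefixNbq; rewrite in_cons mem_cat mem_seq1 eqxx !orbT.
Qed.

Lemma in_EVs_target s t l u : in_EVs e s t l u u.
Proof. by move=> p [_ <- _ _] _; apply: mem_last. Qed.

Lemma in_EVs1 s t u w :
  EVs_exists e s t 1 u -> in_EVs e s t 1 u w -> w = s \/ w = u.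
Proof.
move=> [p [p_simple tNp]] /(_ p p_simple tNp).
have [[-> _]|[-> _ _]] := simple_path_le1 p_simple; rewrite !inE.
  by move=> /eqP; left.
by case/orP=> /eqP; auto.
Qed.

Lemma EVt_exists_source s t l v :
  EVt_exists e s t l v -> ~ in_EVt e s t l v s.
Proof. by move=> [q [q_simple sNq]] /(_ q q_simple sNq); apply/negP. Qed.

Lemma not_in_EVt s t l v w :
  ~ in_EVt e s t l v w ->
  exists q, [/\ simple_path_le e v t l q, s \notin v :: q & w \notin v :: q].
Proof.
move=> wNEVt; apply: NNPP => no_q; apply: wNEVt => q q_simple sNq.
by apply/negPn/negP => wNq; apply: no_q; exists q.
Qed.

End SimplePaths.

Theorem lemma4p6 (V : finType) (e : rel V) (s t u v : V) (k : nat) :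
  s != t -> 2 <= k -> e u v ->
  EVs_exists e s t 1 u -> EVt_exists e s t (k - 2) v ->
  ((~ exists w, in_EVs e s t 1 u w /\ in_EVt e s t (k - 2) v w)
   <-> SPG_edge e k s t u v).
Proof.
move=> _ k_ge2 euv EVs_u EVt_v; split.
- move=> disjoint; have [p0 [p0_simple _]] := EVs_u.
  have [[_ us]|[_ esu sNu]] := simple_path_le1 p0_simple.
    have [q [q_simple sNq]] := EVt_v; subst u.
    exists (v :: q); split; last by rewrite /= inE eqxx.
    by apply: simple_path_le_widen (simple_path_le_cons euv sNq q_simple); lia.
  have uNEVt : ~ in_EVt e s t (k - 2) v u.
    by move=> uEVt; apply: disjoint; exists u; split=> //; apply: in_EVs_target.
  have [q [q_simple sNq uNq]] := not_in_EVt uNEVt.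
  exists [:: u, v & q]; split; last by rewrite /= !inE eqxx orbT.
  have sNuq : s \notin [:: u, v & q] by rewrite in_cons negb_or sNu.
  have /(simple_path_le_cons esu sNuq) := simple_path_le_cons euv uNq q_simple.
  by apply: simple_path_le_widen; lia.
- move=> [p [p_simple uv_in_p]] [w [w_EVs w_EVt]].
  have [ws|wu] := in_EVs1 EVs_u w_EVs.
    by subst w; apply: (EVt_exists_source EVt_v).
  have uNs : u != s.
    by apply/eqP => us; move: w_EVt; rewrite wu us; apply: EVt_exists_source.
  have [q [q_simple sNq uNq]] := simple_path_le_after_edge p_simple uv_in_p uNs.
  by move: (w_EVt q q_simple sNq); rewrite wu (negbTE uNq).
Qed.
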